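(* Define $\tilde P$ on $\text{Ш}_e(A)\bar\otimes\text{Ш}_e(A)\bar\otimes\text{Ш}_e(A)$ by $$\tilde P(\mathfrak{a}\bar\otimes\mathfrak{b}\bar\otimes\mathfrak{c})=\big(P_e(\mathfrak{a})+\mu\mathfrak{a}\big)\bar\otimes\varepsilon_e(\mathfrak{b})1_A\bar\otimes\varepsilon_e(\mathfrak{c})1_A+\mathfrak{a}\bar\otimes\big(P_e(\mathfrak{b})+\mu\mathfrak{b}\big)\bar\otimes\varepsilon_e(\mathfrak{c})1_A+\mathfrak{a}\bar\otimes\mathfrak{b}\bar\otimes P_e(\mathfrak{c}).$$ Then $\tilde P$ is an extended Rota-Baxter operator of weight $(\lambda,\kappa)$ on $\text{Ш}_e(A)\bar\otimes\text{Ш}_e(A)\bar\otimes\text{Ш}_e(A)$. Furthermore, $(\mathrm{id}\otimes\Delta_e)\Delta_e$ and $(\Delta_e\otimes\mathrm{id})\Delta_e$ are extended Rota-Baxter algebra homomorphisms from $(\text{Ш}_e(A),P_e)$ to $(\text{Ш}_e(A)\bar\otimes\text{Ш}_e(A)\bar\otimes\text{Ш}_e(A),\tilde P)$.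
   Context: $\mathbf{k}$ is a commutative unitary ring, $\lambda,\kappa\in\mathbf{k}$, $\mu$ a root of $t^2-\lambda t+\kappa$. An extended Rota-Baxter operator of weight $(\lambda,\kappa)$ satisfies $P(x)P(y)=P(xP(y))+P(P(x)y)+\lambda P(xy)+\kappa xy$. $A=(A,m_A,\mu_A,\Delta_A,\varepsilon_A)$ is a commutative bialgebra and $(\text{Ш}_e(A),\diamond,P_e,j_A)$ is the free commutative extended Rota-Baxter algebra of weight $(\lambda,\kappa)$ on $A$, with $\text{Ш}_e(A)=\bigoplus_{n\ge1}A^{\otimes n}$ and $P_e(\mathfrak{a})=1_A\otimes\mathfrak{a}$. $\varepsilon_e:\text{Ш}_e(A)\to\mathbf{k}$ is the unique extended Rota-Baxter algebra homomorphism with $\varepsilon_e\circ j_A=\varepsilon_A$, $\varepsilon_e\circ P_e=-\mu\varepsilon_e$; $\Delta_e:\text{Ш}_e(A)\to\text{Ш}_e(A)\bar\otimes\text{Ш}_e(A)$ is the unique extended Rota-Baxter algebra homomorphism with $\Delta_e\circ j_A=\Delta_A$, $\Delta_e\circ P_e=\bar P\circ\Delta_e$, where $\bar P(\mathfrak{a}\bar\otimes\mathfrak{b})=P_e(\mathfrak{a})\bar\otimes\varepsilon_e(\mathfrak{b})1_A+\mu\mathfrak{a}\bar\otimes\varepsilon_e(\mathfrak{b})1_A+\mathfrak{a}\bar\otimes P_e(\mathfrak{b})$. $\bar\otimes$ denotes the tensor product between copies of $\text{Ш}_e(A)$, with componentwise multiplication. *)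

From HB Require Import structures.
From mathcomp Require Import all_boot all_algebra.
Set Implicit Arguments. Unset Strict Implicit. Unset Printing Implicit Defensive.
Import GRing.Theory.
Local Open Scope ring_scope.

Definition lin (R : comPzRingType) (U V : lmodType R) (f : U -> V) : Prop :=
  forall (a : R) (x y : U), f (a *: x + y) = a *: f x + f y.

Definition is_tensor2 (R : comPzRingType) (U V W : lmodType R) (t : U -> V -> W) : Prop :=
  (forall u, lin (t u)) /\ (forall v, lin (fun u => t u v)) /\
  forall (M : lmodType R) (b : U -> V -> M),
    (forall u, lin (b u)) -> (forall v, lin (fun u => b u v)) ->
    exists L : W -> M, lin L /\ (forall u v, L (t u v) = b u v) /\
      forall L' : W -> M, lin L' -> (forall u v, L' (t u v) = b u v) ->
        forall w, L' w = L w.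

Definition is_tensor3 (R : comPzRingType) (U1 U2 U3 W : lmodType R)
    (t : U1 -> U2 -> U3 -> W) : Prop :=
  (forall u2 u3, lin (fun u1 => t u1 u2 u3)) /\
  (forall u1 u3, lin (fun u2 => t u1 u2 u3)) /\
  (forall u1 u2, lin (t u1 u2)) /\
  forall (M : lmodType R) (b : U1 -> U2 -> U3 -> M),
    (forall u2 u3, lin (fun u1 => b u1 u2 u3)) ->
    (forall u1 u3, lin (fun u2 => b u1 u2 u3)) ->
    (forall u1 u2, lin (b u1 u2)) ->
    exists L : W -> M, lin L /\ (forall u1 u2 u3, L (t u1 u2 u3) = b u1 u2 u3) /\
      forall L' : W -> M, lin L' ->
        (forall u1 u2 u3, L' (t u1 u2 u3) = b u1 u2 u3) -> forall w, L' w = L w.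

Definition is_alg_tensor2 (R : comPzRingType) (A B C : comAlgType R)
    (t : A -> B -> C) : Prop :=
  is_tensor2 t /\ t 1 1 = 1 /\
  forall a b a' b', t a b * t a' b' = t (a * a') (b * b').

Definition is_alg_tensor3 (R : comPzRingType) (A1 A2 A3 C : comAlgType R)
    (t : A1 -> A2 -> A3 -> C) : Prop :=
  is_tensor3 t /\ t 1 1 1 = 1 /\
  forall a b c a' b' c', t a b c * t a' b' c' = t (a * a') (b * b') (c * c').

Definition is_alg_hom (R : comPzRingType) (A B : comAlgType R) (f : A -> B) : Prop :=
  lin f /\ f 1 = 1 /\ forall x y, f (x * y) = f x * f y.

Definition is_alg_char (R : comPzRingType) (A : comAlgType R) (f : A -> R) : Prop :=
  (forall (a : R) (x y : A), f (a *: x + y) = a * f x + f y) /\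
  f 1 = 1 /\ forall x y, f (x * y) = f x * f y.

Definition is_ERB (R : comPzRingType) (A : comAlgType R) (lam kap : R) (P : A -> A) : Prop :=
  lin P /\
  forall x y, P x * P y = P (x * P y) + P (P x * y) + lam *: P (x * y) + kap *: (x * y).

Definition is_ERB_hom (R : comPzRingType) (A B : comAlgType R)
    (P : A -> A) (Q : B -> B) (f : A -> B) : Prop :=
  is_alg_hom f /\ forall x, f (P x) = Q (f x).

Definition is_free_comm_ERB (R : comPzRingType) (lam kap : R) (A S : comAlgType R)
    (j : A -> S) (P : S -> S) : Prop :=
  is_alg_hom j /\ is_ERB lam kap P /\
  forall (B : comAlgType R) (Q : B -> B) (f : A -> B),
    is_ERB lam kap Q -> is_alg_hom f ->
    exists F : S -> B, is_ERB_hom P Q F /\ (forall a, F (j a) = f a) /\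
      forall G : S -> B, is_ERB_hom P Q G -> (forall a, G (j a) = f a) ->
        forall x, G x = F x.

(* The maps
   (eps (x) id), (id (x) eps), (id (x) Delta), (Delta (x) id) are the
   linear maps determined on pure tensors (quantified universally; they
   exist uniquely by the universal property of the tensor products). *)
Definition is_comm_bialg (R : comPzRingType) (A TA2 TA3 : comAlgType R)
    (tA2 : A -> A -> TA2) (tA3 : A -> A -> A -> TA3)
    (Delta : A -> TA2) (eps : A -> R) : Prop :=
  is_alg_tensor2 tA2 /\ is_alg_tensor3 tA3 /\
  is_alg_hom Delta /\ is_alg_char eps /\
  (forall L : TA2 -> A, lin L -> (forall x y, L (tA2 x y) = eps x *: y) ->
     forall x, L (Delta x) = x) /\
  (forall L : TA2 -> A, lin L -> (forall x y, L (tA2 x y) = eps y *: x) ->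
     forall x, L (Delta x) = x) /\
  (* coassociativity: (id (x) Delta) Delta = (Delta (x) id) Delta *)
  (forall (Lf : A -> TA2 -> TA3) (G : TA2 -> TA3)
          (Lb : A -> TA2 -> TA3) (H : TA2 -> TA3),
     (forall a, lin (Lf a)) -> (forall a b c, Lf a (tA2 b c) = tA3 a b c) ->
     lin G -> (forall a b, G (tA2 a b) = Lf a (Delta b)) ->
     (forall c, lin (Lb c)) -> (forall a b c, Lb c (tA2 a b) = tA3 a b c) ->
     lin H -> (forall a b, H (tA2 a b) = Lb b (Delta a)) ->
     forall x, G (Delta x) = H (Delta x)).

(* P-bar and P-tilde are instances of one construction: for extended Rota-Baxter algebras
   (B, P), (C, Q) and a character eps of C with eps (Q c) = - mu eps c, the operator
     R (b (x) c) = (P b + mu b) (x) eps(c) 1 + b (x) Q c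
   on B (x) C is again extended Rota-Baxter.  On pure tensors its identity splits into that
   of Q and the fact that P + mu is Rota-Baxter of weight lam - 2 mu, which is where
   mu^2 - lam mu + kap = 0 enters.  P-bar is the construction for (Sh, Pe) (x) (Sh, Pe),
   and P-tilde the one for (Sh (x) Sh, P-bar) (x) (Sh, Pe).
   As Delta_e intertwines Pe and P-bar, it remains to see that Delta_e (x) id and
   id (x) Delta_e intertwine P-bar and P-tilde.  The first is the bar shape again; the
   second needs the counit identity (eps_e (x) eps_e) Delta_e = eps_e, which holds by
   freeness, both sides being homomorphisms into (Sh, - mu *:) extending eps_A. *)

From HB Require Import structures.
From mathcomp Require Import all_boot all_algebra.
From mathcomp Require Import ring.
Set Implicit Arguments. Unset Strict Implicit. Unset Printing Implicit Defensive.
Import GRing.Theory.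
Local Open Scope ring_scope.

Section LinearMaps.
Variables (k : comPzRingType) (U V W : lmodType k).

Lemma lin0 (f : U -> V) : lin f -> f 0 = 0.
Proof.
move=> Hf; apply/esym/(addrI (f 0)).
by rewrite addr0 -[X in X + _](scale1r (f 0)) -Hf scaler0 addr0.
Qed.

Lemma linD (f : U -> V) : lin f -> forall x y, f (x + y) = f x + f y.
Proof. by move=> Hf x y; rewrite -[x]scale1r Hf !scale1r. Qed.

Lemma linZ (f : U -> V) : lin f -> forall a x, f (a *: x) = a *: f x.
Proof. by move=> Hf a x; rewrite -[a *: x]addr0 Hf (lin0 Hf) addr0. Qed.

Lemma linN (f : U -> V) : lin f -> forall x, f (- x) = - f x.
Proof. by move=> Hf x; rewrite -scaleN1r (linZ Hf) scaleN1r. Qed.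

Lemma lin_comp (f : U -> V) (g : V -> W) : lin f -> lin g -> lin (fun x => g (f x)).
Proof. by move=> Hf Hg a x y; rewrite Hf Hg. Qed.

Lemma lin_mulr (S : comAlgType k) (f : U -> S) (s : S) :
  lin f -> lin (fun u => f u * s).
Proof. by move=> Hf a x y; rewrite Hf mulrDl scalerAl. Qed.

Lemma lin_mull (S : comAlgType k) (f : U -> S) (s : S) :
  lin f -> lin (fun u => s * f u).
Proof. by move=> Hf a x y; rewrite Hf mulrDr scalerAr. Qed.

End LinearMaps.

Section Characters.
Variables (k : comPzRingType) (A : comAlgType k) (f : A -> k).
Hypothesis Hf : is_alg_char f.

Lemma charD x y : f (x + y) = f x + f y.
Proof. exact: (linD (proj1 Hf : lin (V := k^o) f)). Qed.

Lemma charZ a x : f (a *: x) = a * f x.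
Proof. exact: (linZ (proj1 Hf : lin (V := k^o) f)). Qed.

End Characters.

Lemma scale_in_alg (k : comPzRingType) (S : comAlgType k) (a : k) (x : S) :
  a *: x = in_alg S a * x.
Proof. by rewrite in_algE mulr_algl. Qed.

Lemma is_alg_hom_comp (k : comPzRingType) (A B C : comAlgType k)
    (f : A -> B) (g : B -> C) :
  is_alg_hom f -> is_alg_hom g -> is_alg_hom (fun x => g (f x)).
Proof.
move=> [Hf [f1 fM]] [Hg [g1 gM]]; split; first exact: lin_comp.
by split=> [|x y]; rewrite ?f1 ?fM.
Qed.

Lemma is_ERB_hom_comp (k : comPzRingType) (A B C : comAlgType k)
    (P : A -> A) (Q : B -> B) (R : C -> C) (f : A -> B) (g : B -> C) :
  is_ERB_hom P Q f -> is_ERB_hom Q R g -> is_ERB_hom P R (fun x => g (f x)).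
Proof.
move=> [Hf fP] [Hg gQ]; split; first exact: is_alg_hom_comp.
by move=> x; rewrite fP gQ.
Qed.

Lemma char_alg_hom (k : comPzRingType) (A S : comAlgType k) (f : A -> k) :
  is_alg_char f -> is_alg_hom (fun x => f x *: (1 : S)).
Proof.
move=> [Hf [f1 fM]]; split; first by move=> a x y; rewrite Hf scalerDl scalerA.
by split=> [|x y]; rewrite ?f1 ?scale1r // fM !scale_in_alg; ring.
Qed.

Lemma scale_ERB (k : comPzRingType) (lam kap mu : k) (S : comAlgType k) :
  mu ^+ 2 - lam * mu + kap = 0 -> is_ERB lam kap (fun x : S => - mu *: x).
Proof.
move=> Hmu; split=> [a x y|x y]; first by rewrite scalerDr !scalerA mulrC.
have kapE : kap = lam * mu - mu ^+ 2.
  by apply/eqP; rewrite -subr_eq0 -Hmu; apply/eqP; ring.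
by rewrite !scale_in_alg kapE; ring.
Qed.

Definition pure_spanning (k : comPzRingType) (U V W : lmodType k) (t : U -> V -> W) :=
  forall (M : lmodType k) (f g : W -> M), lin f -> lin g ->
    (forall u v, f (t u v) = g (t u v)) -> forall w, f w = g w.

Section Tensors.
Variables (k : comPzRingType) (U V W : lmodType k) (t : U -> V -> W).

Lemma tensor2_spanning : is_tensor2 t -> pure_spanning t.
Proof.
move=> [tl [tr tU]] M f g Hf Hg Hfg w.
have [||L [_ [_ L_uniq]]] := tU M (fun u v => f (t u v)).
- by move=> u a x y; rewrite tl (linD Hf) (linZ Hf).
- by move=> v a x y; rewrite tr (linD Hf) (linZ Hf).
by rewrite (L_uniq f) ?(L_uniq g) // => u v; rewrite Hfg.
Qed.

Lemma tensor2_lift : is_tensor2 t -> forall (M : lmodType k) (bil : U -> V -> M),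
  (forall u, lin (bil u)) -> (forall v, lin (bil^~ v)) ->
  exists L : W -> M, lin L /\ forall u v, L (t u v) = bil u v.
Proof.
by move=> [_ [_ tU]] M bil bl br; have [L [? [? _]]] := tU M bil bl br; exists L.
Qed.

End Tensors.

Lemma tensor3_spanning (k : comPzRingType) (U1 U2 U3 W : lmodType k)
    (t : U1 -> U2 -> U3 -> W) :
  is_tensor3 t -> forall (M : lmodType k) (f g : W -> M), lin f -> lin g ->
  (forall u1 u2 u3, f (t u1 u2 u3) = g (t u1 u2 u3)) -> forall w, f w = g w.
Proof.
move=> [t1 [t2 [t3 tU]]] M f g Hf Hg Hfg w.
have [|||L [_ [_ L_uniq]]] := tU M (fun u1 u2 u3 => f (t u1 u2 u3)).
- by move=> u2 u3 a x y; rewrite t1 (linD Hf) (linZ Hf).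
- by move=> u1 u3 a x y; rewrite t2 (linD Hf) (linZ Hf).
- by move=> u1 u2 a x y; rewrite t3 (linD Hf) (linZ Hf).
by rewrite (L_uniq f) ?(L_uniq g) // => u1 u2 u3; rewrite Hfg.
Qed.

Lemma spanning_mul (k : comPzRingType) (U V W S : comAlgType k) (t : U -> V -> W)
    (F G H : W -> S) :
  pure_spanning t -> (forall u v u' v', t u v * t u' v' = t (u * u') (v * v')) ->
  lin F -> lin G -> lin H ->
  (forall u v u' v', F (t u v) * G (t u' v') = H (t (u * u') (v * v'))) ->
  forall w w', F w * G w' = H (w * w').
Proof.
move=> tS tM HF HG HH FGH w w'.
apply: (tS _ (fun w => F w * G w') (fun w => H (w * w'))) => [||u v].
- exact: lin_mulr.
- by move=> a x y; rewrite mulrDl -scalerAl HH.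
apply: (tS _ (fun w' => F (t u v) * G w') (fun w' => H (t u v * w'))) => [||u' v'].
- exact: lin_mull.
- by move=> a x y; rewrite mulrDr -scalerAr HH.
by rewrite tM.
Qed.

Lemma ERB_of_pure (k : comPzRingType) (lam kap : k) (B C T : comAlgType k)
    (t : B -> C -> T) (R : T -> T) :
  pure_spanning t -> lin R ->
  (forall b c b' c', let x := t b c in let y := t b' c' in
     R x * R y = R (x * R y) + R (R x * y) + lam *: R (x * y) + kap *: (x * y)) ->
  is_ERB lam kap R.
Proof.
move=> tS HR pure; split=> // x y.
pose rhs x y := R (x * R y) + R (R x * y) + lam *: R (x * y) + kap *: (x * y).
have rhs_linl y0 : lin (rhs^~ y0).
  move=> a u v; rewrite /rhs HR !mulrDl -!scalerAl !(linD HR, linZ HR).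
  by rewrite !scale_in_alg; ring.
have rhs_linr x0 : lin (rhs x0).
  move=> a u v; rewrite /rhs HR !mulrDr -!scalerAr !(linD HR, linZ HR).
  by rewrite !scale_in_alg; ring.
apply: (tS _ (fun x => R x * R y) (rhs^~ y)) => [||b c]; [exact: lin_mulr | by [] |].
apply: (tS _ (fun y => R (t b c) * R y) (rhs (t b c))) => [||b' c'].
- exact: lin_mull.
- by [].
exact: pure.
Qed.

Section BarOperator.
Variables (k : comPzRingType) (lam kap mu : k) (B C T : comAlgType k).
Variable t : B -> C -> T.

Definition mul_pairing : Prop :=
  [/\ lin (t^~ 1), lin (t 1), t 1 1 = 1 &
      forall b c b' c', t b c * t b' c' = t (b * b') (c * c')].

Definition is_bar_operator (P : B -> B) (Q : C -> C) (eps : C -> k) (R : T -> T) :=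
  forall b c, R (t b c) = t (P b + mu *: b) (eps c *: 1) + t b (Q c).

Variables (P : B -> B) (Q : C -> C) (eps : C -> k) (R : T -> T).
Hypotheses (Heps : is_alg_char eps) (HepsQ : forall c, eps (Q c) = - mu * eps c).
Hypotheses (tS : pure_spanning t) (HR : lin R) (HRt : is_bar_operator P Q eps R).

Section ExtendedRotaBaxter.
Hypothesis Hmu : mu ^+ 2 - lam * mu + kap = 0.
Hypotheses (tM : mul_pairing) (HP : is_ERB lam kap P) (HQ : is_ERB lam kap Q).

Lemma bar_ERB_pure b c b' c' : let x := t b c in let y := t b' c' in
  R x * R y = R (x * R y) + R (R x * y) + lam *: R (x * y) + kap *: (x * y).
Proof.
have [tl tr t11 tMul] := tM.
have [HPl HPe] := HP; have [HQl HQe] := HQ.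
have [_ [eps1 epsM]] := Heps.
have PxPy x y : P (x * P y) = P x * P y - kap *: (x * y) - lam *: P (x * y) - P (P x * y).
  by rewrite HPe !addrK.
have QxQy x y : Q (x * Q y) = Q x * Q y - kap *: (x * y) - lam *: Q (x * y) - Q (Q x * y).
  by rewrite HQe !addrK.
have kapE : kap = lam * mu - mu ^+ 2.
  by apply/eqP; rewrite -subr_eq0 -Hmu; apply/eqP; ring.
(* t b c = L b * M c with L, M linear and multiplicative, so the goal becomes an
   identity of polynomials over T in the values of L and M. *)
pose L x := t x 1; pose M y := t 1 y.
have tE x y : t x y = L x * M y by rewrite /L /M tMul mulr1 mul1r.
have LM x y : L (x * y) = L x * L y by rewrite /L tMul mulr1.
have MM x y : M (x * y) = M x * M y by rewrite /M tMul mulr1.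
have L1 : L 1 = 1 := t11.
have M1 : M 1 = 1 := t11.
have Llin : lin L := tl.
have Mlin : lin M := tr.
move=> /=; rewrite !HRt !(mulrDl, mulrDr) !tMul !(linD HR) !HRt.
rewrite !(mulrDr, mulrDl, mulr1, mul1r, =^~scalerAl, =^~scalerAr).
rewrite !(linD HPl, linZ HPl, linD HQl, linZ HQl).
rewrite !(charD Heps, charZ Heps, epsM, eps1, HepsQ) !PxPy !QxQy.
rewrite !tE !(linD Llin, linZ Llin, linN Llin, linD Mlin, linZ Mlin, linN Mlin, LM, MM, L1, M1).
by rewrite !scale_in_alg kapE; ring.
Qed.

Lemma bar_ERB : is_ERB lam kap R.
Proof. exact: (ERB_of_pure tS HR bar_ERB_pure). Qed.

End ExtendedRotaBaxter.

Lemma bar_counit (epsB : B -> k) (N : lmodType k) (n : N) (epsT : T -> N) :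
  is_alg_char epsB -> (forall b, epsB (P b) = - mu * epsB b) -> lin epsT ->
  (forall b c, epsT (t b c) = (epsB b * eps c) *: n) ->
  forall x, epsT (R x) = - mu *: epsT x.
Proof.
move=> HepsB HepsBP HepsT HepsTt; apply: tS => [||b c]; first exact: lin_comp.
  by move=> a x y; rewrite HepsT scalerDr !scalerA mulrC.
have [_ [eps1 _]] := Heps.
rewrite HRt (linD HepsT) !HepsTt (charD HepsB) !(charZ HepsB, charZ Heps).
rewrite HepsBP HepsQ eps1.
by rewrite !scalerA -scalerDl; congr (_ *: _); ring.
Qed.

End BarOperator.

Lemma alg_tensor2_mul_pairing (k : comPzRingType) (B C T : comAlgType k)
    (t : B -> C -> T) :
  is_alg_tensor2 t -> mul_pairing t.
Proof. by move=> [[tl [tr _]] [t11 tM]]; split. Qed.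

Section Coproduct.
Variables (k : comPzRingType) (Sh T2 T3 : comAlgType k).
Variables (t2 : Sh -> Sh -> T2) (t3 : Sh -> Sh -> Sh -> T3).
Hypotheses (HT2 : is_alg_tensor2 t2) (HT3 : is_alg_tensor3 t3).

Lemma t2_spanning : pure_spanning t2.
Proof. exact: tensor2_spanning (proj1 HT2). Qed.

Lemma tensor2_family_mul (X : comAlgType k) (s : X -> T2 -> T3) :
  (forall x, lin (s x)) ->
  (forall x b c x' b' c',
     s x (t2 b c) * s x' (t2 b' c') = s (x * x') (t2 (b * b') (c * c'))) ->
  forall x x' u u', s x u * s x' u' = s (x * x') (u * u').
Proof.
move=> Hs Hst x x'; have [_ [_ t2M]] := HT2.
by apply: spanning_mul t2_spanning t2M _ _ _ _ => // b c b' c'; rewrite t2M Hst.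
Qed.

Variable epse : Sh -> k.
Hypothesis Hepse : is_alg_char epse.

Lemma tensor2_counit_exists : exists ee : T2 -> Sh,
  is_alg_hom ee /\ forall a b, ee (t2 a b) = (epse a * epse b) *: 1.
Proof.
have [_ [e1 eM]] := Hepse; have [_ [t2one t2M]] := HT2.
have [||ee [Hee Heet]] :=
  tensor2_lift (proj1 HT2) (bil := fun a b => (epse a * epse b) *: (1 : Sh)).
- by move=> a r x y; rewrite (charD Hepse) (charZ Hepse) !scale_in_alg; ring.
- by move=> b r x y; rewrite (charD Hepse) (charZ Hepse) !scale_in_alg; ring.
exists ee; split=> //; split=> //; split; first by rewrite -t2one Heet e1 mulr1 scale1r.
move=> x y; symmetry; apply: (spanning_mul t2_spanning t2M Hee Hee Hee) => a b a' b'.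
by rewrite !Heet !eM !scale_in_alg; ring.
Qed.

(* The pairing (u, c) |-> Lb c u presents Sh (x) Sh (x) Sh as (Sh (x) Sh) (x) Sh. *)
Variable Lb : Sh -> T2 -> T3.
Hypotheses (HLb : forall c, lin (Lb c)) (HLbt : forall a b c, Lb c (t2 a b) = t3 a b c).

Lemma assoc_mul_pairing : mul_pairing (fun u c => Lb c u).
Proof.
have [_ [t2one _]] := HT2; have [[_ [_ [t3r _]]] [t3one t3M]] := HT3.
split=> [||/=|].
- exact: HLb.
- by move=> a x y; rewrite -t2one !HLbt; exact: t3r.
- by rewrite -t2one HLbt t3one.
move=> u c u' c'; apply: tensor2_family_mul => // {}c a b {}c' a' b'.
by rewrite !HLbt t3M.
Qed.

Lemma assoc_spanning : pure_spanning (fun u c => Lb c u).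
Proof.
move=> M f g Hf Hg Hfg; apply: (tensor3_spanning (proj1 HT3)) => // a b c.
by rewrite -HLbt Hfg.
Qed.

Variables (mu : k) (Pe : Sh -> Sh) (Pbar : T2 -> T2) (Pt : T3 -> T3).
Hypotheses (HPbar : lin Pbar) (HPt : lin Pt).
Hypothesis HPbart : forall a b, Pbar (t2 a b) =
  t2 (Pe a) (epse b *: 1) + mu *: t2 a (epse b *: 1) + t2 a (Pe b).
Hypothesis HPtt : forall a b c, Pt (t3 a b c) =
    t3 (Pe a + mu *: a) (epse b *: 1) (epse c *: 1)
  + t3 a (Pe b + mu *: b) (epse c *: 1)
  + t3 a b (Pe c).

Lemma Pbar_bar : is_bar_operator mu t2 Pe Pe epse Pbar.
Proof.
have [[_ [t2l _]] _] := HT2.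
by move=> a b; rewrite HPbart (linD (t2l _)) (linZ (t2l _)).
Qed.

Lemma Pt_bar_assoc : is_bar_operator mu (fun u c => Lb c u) Pbar Pe epse Pt.
Proof.
have [[t3l [t3m _]] _] := HT3.
move=> u c /=; apply: (t2_spanning (f := fun u => Pt (Lb c u))
  (g := fun u => Lb (epse c *: 1) (Pbar u + mu *: u) + Lb (Pe c) u)).
- exact: lin_comp.
- move=> r x y; rewrite HPbar !(linD (HLb _), linZ (HLb _)) !scale_in_alg; ring.
move=> a b; rewrite HLbt HPtt HPbart !(linD (HLb _), linZ (HLb _)) !HLbt.
rewrite !(linD (t3l _ _), linZ (t3l _ _), linD (t3m _ _), linZ (t3m _ _)).
by rewrite !scale_in_alg; ring.
Qed.

Variable Lf : Sh -> T2 -> T3.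
Hypotheses (HLf : forall a, lin (Lf a)) (HLft : forall a b c, Lf a (t2 b c) = t3 a b c).
Variable ee : T2 -> Sh.
Hypotheses (Hee : lin ee) (Heet : forall a b, ee (t2 a b) = (epse a * epse b) *: 1).

Lemma Pt_Lf a u : Pt (Lf a u) = Lf a (Pbar u) + t3 (Pe a + mu *: a) (ee u) 1.
Proof.
have [[t3l [t3m [t3r _]]] _] := HT3.
apply: (t2_spanning (f := fun u => Pt (Lf a u))
  (g := fun u => Lf a (Pbar u) + t3 (Pe a + mu *: a) (ee u) 1)).
- exact: lin_comp.
- move=> r x y; rewrite HPbar Hee.
  rewrite !(linD (HLf _), linZ (HLf _), linD (t3m _ _), linZ (t3m _ _)).
  by rewrite !scale_in_alg; ring.
move=> b c; rewrite HLft HPtt Heet HPbart !(linD (HLf _), linZ (HLf _)) !HLft.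
rewrite !(linD (t3l _ _), linZ (t3l _ _), linD (t3m _ _), linZ (t3m _ _), linZ (t3r _ _)).
by rewrite !scale_in_alg; ring.
Qed.

Variables (Deltae : Sh -> T2) (IdD DId : T2 -> T3).
Hypotheses (HDeltae : is_alg_hom Deltae).
Hypothesis HDeltaeP : forall x, Deltae (Pe x) = Pbar (Deltae x).
Hypothesis counit : forall x, ee (Deltae x) = epse x *: 1.
Hypotheses (HIdD : lin IdD) (HIdDt : forall a b, IdD (t2 a b) = Lf a (Deltae b)).
Hypotheses (HDId : lin DId) (HDIdt : forall a b, DId (t2 a b) = Lb b (Deltae a)).

Lemma Deltae_scalar r : Deltae (r *: 1) = r *: t2 1 1.
Proof.
by have [HDl [HD1 _]] := HDeltae; have [_ [t2one _]] := HT2; rewrite (linZ HDl) HD1 t2one.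
Qed.

Lemma IdD_ERB_hom : is_ERB_hom Pbar Pt IdD.
Proof.
have [_ [t2one t2M]] := HT2; have [[t3l [t3m _]] [t3one t3M]] := HT3.
have [_ [HD1 HDM]] := HDeltae.
have LfM a a' u u' : Lf a u * Lf a' u' = Lf (a * a') (u * u').
  by apply: tensor2_family_mul => // {}a b c {}a' b' c'; rewrite !HLft t3M.
split; first split; [exact: HIdD | split |].
- by rewrite -t2one HIdDt HD1 -t2one HLft t3one.
- move=> x y; symmetry; apply: (spanning_mul t2_spanning t2M HIdD HIdD HIdD).
  by move=> a b a' b'; rewrite !HIdDt HDM LfM.
move=> u; apply: (t2_spanning (f := fun u => IdD (Pbar u)) (g := fun u => Pt (IdD u))).
- exact: lin_comp.
- exact: lin_comp.
move=> a b; rewrite HIdDt Pt_Lf counit HPbart !(linD HIdD, linZ HIdD) !HIdDt HDeltaeP.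
rewrite !Deltae_scalar !(linZ (HLf _)) !HLft.
rewrite !(linD (t3l _ _), linZ (t3l _ _), linZ (t3m _ _)).
by rewrite !scale_in_alg; ring.
Qed.

Lemma DId_ERB_hom : is_ERB_hom Pbar Pt DId.
Proof.
have [_ [t2one t2M]] := HT2; have [_ [t3one _]] := HT3.
have [_ [HD1 HDM]] := HDeltae.
have [_ _ _ LbM] := assoc_mul_pairing.
split; first split; [exact: HDId | split |].
- by rewrite -t2one HDIdt HD1 -t2one HLbt t3one.
- move=> x y; symmetry; apply: (spanning_mul t2_spanning t2M HDId HDId HDId).
  by move=> a b a' b'; rewrite !HDIdt HDM LbM.
move=> u; apply: (t2_spanning (f := fun u => DId (Pbar u)) (g := fun u => Pt (DId u))).
- exact: lin_comp.
- exact: lin_comp.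
move=> a b; rewrite HDIdt Pt_bar_assoc HPbart !(linD HDId, linZ HDId) !HDIdt HDeltaeP.
by rewrite !(linD (HLb _), linZ (HLb _)).
Qed.

End Coproduct.

Section Counit.
Variables (k : comPzRingType) (lam kap mu : k).
Hypothesis Hmu : mu ^+ 2 - lam * mu + kap = 0.
Variables (A TA2 TA3 : comAlgType k) (tA2 : A -> A -> TA2) (tA3 : A -> A -> A -> TA3).
Variables (DeltaA : A -> TA2) (epsA : A -> k).
Hypothesis HA : is_comm_bialg tA2 tA3 DeltaA epsA.
Variables (Sh T2 : comAlgType k) (Pe : Sh -> Sh) (jA : A -> Sh) (t2 : Sh -> Sh -> T2).
Variables (epse : Sh -> k) (jj : TA2 -> T2) (Pbar : T2 -> T2) (Deltae : Sh -> T2).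
Hypotheses (Hepse : is_alg_char epse) (Hepsej : forall a, epse (jA a) = epsA a).
Hypotheses (Hjj : lin jj) (Hjjt : forall a b, jj (tA2 a b) = t2 (jA a) (jA b)).
Variable ee : T2 -> Sh.
Hypotheses (Hee : is_alg_hom ee) (Heet : forall a b, ee (t2 a b) = (epse a * epse b) *: 1).

Lemma counit_jj a : ee (jj (DeltaA a)) = epsA a *: 1.
Proof.
have [[HtA2 _] [_ [_ [HepsA [Hcl _]]]]] := HA.
have [||LA [HLA HLAt]] := tensor2_lift HtA2 (bil := fun x y => epsA x *: y).
- by move=> x r y z; rewrite scalerDr !scalerA mulrC.
- by move=> y r x z; rewrite (charD HepsA) (charZ HepsA) scalerDl scalerA.
rewrite -{2}(Hcl LA HLA HLAt a).
apply: (tensor2_spanning HtA2 (f := fun w => ee (jj w)) (g := fun w => epsA (LA w) *: 1)).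
- exact: lin_comp (proj1 Hee).
- by move=> r x y; rewrite HLA (charD HepsA) (charZ HepsA) scalerDl scalerA.
by move=> x y; rewrite Hjjt Heet HLAt (charZ HepsA) !Hepsej.
Qed.

Hypothesis Hfree : is_free_comm_ERB lam kap jA Pe.
Hypothesis HepseP : forall x, epse (Pe x) = - mu * epse x.
Hypotheses (HDeltae : is_alg_hom Deltae) (HDeltaej : forall a, Deltae (jA a) = jj (DeltaA a)).
Hypothesis HDeltaeP : forall x, Deltae (Pe x) = Pbar (Deltae x).
Hypothesis HeePbar : forall u, ee (Pbar u) = - mu *: ee u.

Lemma coproduct_counit x : ee (Deltae x) = epse x *: 1.
Proof.
have [_ [_ free]] := Hfree; have [_ [_ [_ [HepsA _]]]] := HA.
have [F [_ [_ F_uniq]]] := free Sh _ _ (scale_ERB Sh Hmu) (char_alg_hom Sh HepsA).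
rewrite (F_uniq (fun x => ee (Deltae x))) ?(F_uniq (fun x => epse x *: 1)) //.
- split; first exact: char_alg_hom.
  by move=> y; rewrite HepseP scalerA.
- by move=> a; rewrite Hepsej.
- exact: is_ERB_hom_comp (conj HDeltae HDeltaeP) (conj Hee HeePbar).
- by move=> a; rewrite HDeltaej counit_jj.
Qed.

End Counit.

Unset Implicit Arguments.
Set Strict Implicit.

Theorem lemma4p6
  (k : comPzRingType) (lam kap mu : k) (Hmu : mu ^+ 2 - lam * mu + kap = 0)
  (* the commutative bialgebra A, with A(x)A = TA2 and A(x)A(x)A = TA3 *)
  (A TA2 TA3 : comAlgType k) (tA2 : A -> A -> TA2) (tA3 : A -> A -> A -> TA3)
  (DeltaA : A -> TA2) (epsA : A -> k)
  (HA : is_comm_bialg tA2 tA3 DeltaA epsA)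
  (* the free commutative extended RB algebra (Sh, P_e, j_A) on A *)
  (Sh : comAlgType k) (Pe : Sh -> Sh) (jA : A -> Sh)
  (Hfree : is_free_comm_ERB lam kap jA Pe)
  (* Sh (x) Sh = T2 and Sh (x) Sh (x) Sh = T3, with componentwise product *)
  (T2 T3 : comAlgType k) (t2 : Sh -> Sh -> T2) (t3 : Sh -> Sh -> Sh -> T3)
  (HT2 : is_alg_tensor2 t2) (HT3 : is_alg_tensor3 t3)
  (* the counit eps_e *)
  (epse : Sh -> k) (Hepse : is_alg_char epse)
  (Hepsej : forall a, epse (jA a) = epsA a)
  (HepseP : forall x, epse (Pe x) = - mu * epse x)
  (* jA (x) jA : A(x)A -> Sh(x)Sh *)
  (jj : TA2 -> T2) (Hjj : lin jj) (Hjjt : forall a b, jj (tA2 a b) = t2 (jA a) (jA b))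
  (* the operator P-bar on Sh (x) Sh *)
  (Pbar : T2 -> T2) (HPbar : lin Pbar)
  (HPbart : forall a b, Pbar (t2 a b) =
      t2 (Pe a) (epse b *: 1) + mu *: t2 a (epse b *: 1) + t2 a (Pe b))
  (* the coproduct Delta_e *)
  (Deltae : Sh -> T2) (HDeltae : is_alg_hom Deltae)
  (HDeltaej : forall a, Deltae (jA a) = jj (DeltaA a))
  (HDeltaeP : forall x, Deltae (Pe x) = Pbar (Deltae x))
  (* the operator P-tilde on Sh (x) Sh (x) Sh *)
  (Pt : T3 -> T3) (HPt : lin Pt)
  (HPtt : forall a b c, Pt (t3 a b c) =
      t3 (Pe a + mu *: a) (epse b *: 1) (epse c *: 1)
    + t3 a (Pe b + mu *: b) (epse c *: 1)
    + t3 a b (Pe c))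
  (* id (x) Delta_e : Sh(x)Sh -> Sh(x)Sh(x)Sh, via a (x) (b (x) c) |-> a (x) b (x) c *)
  (Lf : Sh -> T2 -> T3) (HLf : forall a, lin (Lf a))
  (HLft : forall a b c, Lf a (t2 b c) = t3 a b c)
  (IdD : T2 -> T3) (HIdD : lin IdD) (HIdDt : forall a b, IdD (t2 a b) = Lf a (Deltae b))
  (* Delta_e (x) id : Sh(x)Sh -> Sh(x)Sh(x)Sh, via (a (x) b) (x) c |-> a (x) b (x) c *)
  (Lb : Sh -> T2 -> T3) (HLb : forall c, lin (Lb c))
  (HLbt : forall a b c, Lb c (t2 a b) = t3 a b c)
  (DId : T2 -> T3) (HDId : lin DId) (HDIdt : forall a b, DId (t2 a b) = Lb b (Deltae a)) :
  is_ERB lam kap Pt /\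
  is_ERB_hom Pe Pt (fun x => IdD (Deltae x)) /\
  is_ERB_hom Pe Pt (fun x => DId (Deltae x)).
Proof.
have [_ [HPe _]] := Hfree.
have HPbar_bar := Pbar_bar HT2 HPbart.
have Pbar_ERB : is_ERB lam kap Pbar.
  exact: (bar_ERB Hepse HepseP (t2_spanning HT2) HPbar HPbar_bar Hmu
    (alg_tensor2_mul_pairing HT2) HPe HPe).
have [ee [Hee Heet]] := tensor2_counit_exists HT2 Hepse.
have HeePbar : forall u, ee (Pbar u) = - mu *: ee u.
  exact: (bar_counit Hepse HepseP (t2_spanning HT2) HPbar HPbar_bar
    Hepse HepseP (proj1 Hee) Heet).
have counit := coproduct_counit Hmu HA Hepse Hepsej Hjj Hjjt Hee Heet Hfree
  HepseP HDeltae HDeltaej HDeltaeP HeePbar.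
split.
  exact: (bar_ERB Hepse HepseP (assoc_spanning HT3 HLbt) HPt
    (Pt_bar_assoc HT2 HT3 HLb HLbt HPbar HPt HPbart HPtt) Hmu
    (assoc_mul_pairing HT2 HT3 HLb HLbt) Pbar_ERB HPe).
split; apply: is_ERB_hom_comp (conj HDeltae HDeltaeP) _.
- exact: (IdD_ERB_hom HT2 HT3 HPbar HPt HPbart HPtt HLf HLft (proj1 Hee) Heet
    HDeltae HDeltaeP counit HIdD HIdDt).
- exact: (DId_ERB_hom HT2 HT3 HLb HLbt HPbar HPt HPbart HPtt
    HDeltae HDeltaeP HDId HDIdt).
Qed.
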